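(* Let $\eta\in\mathbb R_+^*$ and $R\in\mathbb R_+$. Let $\mathcal G^\star=(G^\star,\pi_\star,c_\star)\in\mathrm{LiftPMod}(\mathbb B,\mathcal C)$ with $G^\star=(V^\star,E^\star)$ and $w^\star\in\mathrm{Param}(\mathcal G^\star)$. Let $\alpha:V^\star\to(0,1]$, $\mathcal G=(G,\pi,c)\in\mathrm{LiftPMod}(\mathbb B,\mathcal C)$ and $w^0\in\mathrm{Param}(\mathcal G)$. Define $n:V_B\to\mathbb N$, $n_b=\#\pi^{-1}(b)$, and $d:E_B\to\mathbb N$, $d_{(a,b)}=\sup_{v\in\pi^{-1}(a)}\#(G(v,-)\cap\pi^{-1}(b))$. Assume $n_b\ge n_a\log n_a$ for all $(a,b)\in E_B$, and that there is $\Lambda\in\mathbb R_+$ with $\sup_{b\in V_B}\sum_{a\in B(-,b)}d_{(a,b)}\frac{n_a}{n_b}\le\Lambda$ and $\inf_{b\in V_B\setminus I_B}n_b\ge\frac{2R^2}{\eta^2}\frac{(1+\Lambda)^{\#V_B}}{\inf_{v\in V^\star}\alpha(v)}$. Then for every $w\in\mathrm{Param}(\mathcal G)$ with $\|w-w^0\|\le R$: if $\mathcal M^\alpha_\eta[(\mathcal G,w^0),(\mathcal G^\star,w^\star)]\ne\varnothing$ then $\mathcal M^{\alpha/2}_{2\eta}[(\mathcal G,w),(\mathcal G^\star,w^\star)]\ne\varnothing$.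
   Context: Graphs $G=(V,E)$, parents $G(-,v)$, children $G(v,-)$; homomorphisms (edge-preserving vertex maps, acting on edges componentwise); fibrations (homomorphisms restricting to bijections $G(-,v)\to H(-,\varphi(v))$). Perceptron module over a finite DAG $B=(V_B,E_B)$: $\mathbb B=((I_B,T_B),(\mathcal Y,\mathcal Z,\mathcal W),(M,\sigma))$, $I_B$ parentless vertices, $T_B\subseteq V_B$, finite-dimensional real inner product spaces $\mathcal Y_v,\mathcal Z_e,\mathcal W_e$, maps $M_{(u,v)}:\mathcal W_{(u,v)}\times\mathcal Y_u\to\mathcal Z_{(u,v)}$, $\sigma_v:\prod_{u\in B(-,v)}\mathcal Z_{(u,v)}\to\mathcal Y_v$. Fix $\mathbb B$, finite $\mathcal C$, $p_{\mathcal C}:\mathcal C\to I_B$. $\mathrm{LiftPMod}(\mathbb B,\mathcal C)$: triples $(G,\pi,c)$, $G=(V_G,E_G)$ a graph, $\pi:G\to B$ homomorphism, $c:\pi^{-1}(I_B)\to\mathcal C$ injective with $p_{\mathcal C}\circ c=\pi$ there; $\mathrm{Param}(\mathcal G)=\prod_{e\in E_G}\mathcal W_{\pi(e)}$ with norm $\|w\|^2=\sum_e\|w_e\|^2$. Morphism $(G,\pi_G,c_G)\to(H,\pi_H,c_H)$: fibration $\varphi$ with $\pi_G=\pi_H\circ\varphi$, $c_G=c_H\circ\varphi$. Partial morphism $(S,\varphi)$: subgraph $S$ of $G$ whose inclusion is a fibration, with a morphism $\varphi:(S,\pi_G|_S,c_G|_S)\to(H,\pi_H,c_H)$. $\mathcal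 M^\alpha_\eta[(\mathcal G,w_G),(\mathcal H,w_H)]$: set of partial morphisms with $\|(w_G)_e-(w_H)_{\varphi(e)}\|\le\eta$ for all edges $e$ of $S$ and $\#\varphi^{-1}(v)\ge\alpha(v)\#\pi_G^{-1}(\pi_H(v))$ for all $v\in V_H$. *)

From HB Require Import structures.
From mathcomp Require Import all_boot all_order all_algebra.
From mathcomp Require Import reals exp.
Set Implicit Arguments. Unset Strict Implicit. Unset Printing Implicit Defensive.
Import Order.TTheory GRing.Theory Num.Theory.
Local Open Scope ring_scope.

Definition is_dag (VB : finType) (EB : rel VB) : Prop :=
  forall a b, EB a b -> ~~ connect EB b a.

Definition parentless (VB : finType) (EB : rel VB) : {set VB} :=
  [set b | [forall a, ~~ EB a b]].

Definition is_hom (V W : finType) (E : rel V) (F : rel W) (f : V -> W) : Prop :=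
  forall u v, E u v -> F (f u) (f v).

Definition fibration_on (V W : finType) (S : {set V}) (ES : rel V) (F : rel W)
  (f : V -> W) : Prop :=
  forall v, v \in S ->
    {in [pred u | ES u v] &, injective f} /\
    (forall x, F x (f v) -> exists2 u, ES u v & f u = x).

(* (G, pi, c) ∈ LiftPMod(B, C); c is the partial map pi^{-1}(I_B) -> C,
   encoded as an option-valued function with domain exactly pi^{-1}(I_B). *)
Definition is_lift (VB : finType) (EB : rel VB) (C : finType) (pC : C -> VB)
  (V : finType) (E : rel V) (pi : V -> VB) (c : V -> option C) : Prop :=
  [/\ is_hom E EB pi,
      forall v, (pi v \in parentless EB) = (c v != None),
      forall v x, c v = Some x -> pC x = pi v &
      forall u v, pi u \in parentless EB -> c u = c v -> u = v].

Definition fiber_card (V VB : finType) (pi : V -> VB) (b : VB) : nat :=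
  #|[set v | pi v == b]|.

(* d_(a,b) = sup_{v ∈ pi^{-1}(a)} #(G(v,-) ∩ pi^{-1}(b))   (sup ∅ = 0) *)
Definition max_outdeg (V VB : finType) (E : rel V) (pi : V -> VB) (a b : VB) : nat :=
  \max_(v | pi v == a) #|[set x | E v x && (pi x == b)]|.

Section Param.
Variable R : realType.

(* W_(a,b) is modelled as the Euclidean space 'rV[R]_(dW a b) *)
Definition normW (k : nat) (x : 'rV[R]_k) : R := Num.sqrt (\sum_i x 0 i ^+ 2).

(* Param(G) = ∏_{e ∈ E_G} W_{pi(e)}, encoded as
   w : forall u v, 'rV_(dW (pi u) (pi v)); only values on edges matter. *)
Definition param (VB : finType) (dW : VB -> VB -> nat) (V : finType) (pi : V -> VB)
  := forall u v : V, 'rV[R]_(dW (pi u) (pi v)).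

Definition param_dist (VB : finType) (dW : VB -> VB -> nat) (V : finType) (E : rel V)
  (pi : V -> VB) (w w' : param dW pi) : R :=
  Num.sqrt (\sum_(u : V) \sum_(v : V | E u v) normW (w u v - w' u v) ^+ 2).

Definition in_M (VB : finType) (EB : rel VB) (C : finType) (dW : VB -> VB -> nat)
  (V : finType) (E : rel V) (pi : V -> VB) (c : V -> option C) (w : param dW pi)
  (H : finType) (F : rel H) (piH : H -> VB) (cH : H -> option C) (wH : param dW piH)
  (alpha : H -> R) (eta : R)
  (VS : {set V}) (ES : rel V) (phi : V -> H) : Prop :=
  [/\
      ((forall u v, ES u v -> [&& E u v, u \in VS & v \in VS]) /\
       fibration_on VS ES E id),
      ((forall u v, ES u v -> F (phi u) (phi v)) /\ fibration_on VS ES F phi),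
      (* compatibility with pi and c (c_S = c_G restricted to pi_S^{-1}(I_B)) *)
      ((forall v, v \in VS -> piH (phi v) = pi v) /\
       (forall v, v \in VS -> pi v \in parentless EB -> c v = cH (phi v))),
      (* weights: ||(w)_e - (wH)_phi(e)|| <= eta on every edge of S
         (the cast identifies W_{pi_H(phi e)} with W_{pi(e)}) *)
      (forall u v, ES u v ->
         forall h : dW (piH (phi u)) (piH (phi v)) = dW (pi u) (pi v),
           normW (w u v - castmx (erefl 1%N, h) (wH (phi u) (phi v))) <= eta) &
      forall x : H,
        alpha x * (#|[set v | pi v == piH x]|)%:R <= (#|[set v in VS | phi v == x]|)%:R].

Definition M_nonempty (VB : finType) (EB : rel VB) (C : finType) (dW : VB -> VB -> nat)
  (V : finType) (E : rel V) (pi : V -> VB) (c : V -> option C) (w : param dW pi)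
  (H : finType) (F : rel H) (piH : H -> VB) (cH : H -> option C) (wH : param dW piH)
  (alpha : H -> R) (eta : R) : Prop :=
  exists (VS : {set V}) (ES : rel V) (phi : V -> H),
    @in_M VB EB C dW V E pi c w H F piH cH wH alpha eta VS ES phi.

End Param.

(* Call an edge of G far if w differs there from w0 by more than eta; since ||w - w0|| <= R there
   are at most R^2/eta^2 far edges. Remove from the given partial morphism every vertex reachable
   from the head of a far edge: what remains is still a partial morphism (the removed set is
   closed under children, so the remaining subgraph is closed under parents), and its edges moved
   by at most eta, hence lie within 2 eta of their images. The removed part of the fiber over b
   consists of heads of far edges (none if b is an input vertex) and of children of removed
   vertices over the parents a of b, at most d_(a,b) for each of them. Going down the DAG B, the
   bound on the sums of d_(a,b) n_a / n_b multiplies the removed proportion of a fiber by at most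
   1 + Lambda per level, and the lower bound on n_b makes the final proportion at most alpha/2. *)
From HB Require Import structures.
From mathcomp Require Import all_boot all_order all_algebra.
From mathcomp Require Import reals exp.
From mathcomp Require Import ring lra.
Set Implicit Arguments. Unset Strict Implicit. Unset Printing Implicit Defensive.
Import Order.TTheory GRing.Theory Num.Theory.
Local Open Scope ring_scope.

Lemma lagrange_identity (R : comPzRingType) n (a b : 'I_n -> R) :
  2 * ((\sum_i a i ^+ 2) * (\sum_i b i ^+ 2) - (\sum_i a i * b i) ^+ 2)
  = \sum_i \sum_j (a i * b j - a j * b i) ^+ 2.
Proof.
have -> : \sum_i \sum_j (a i * b j - a j * b i) ^+ 2 =
    \sum_i \sum_j a i ^+ 2 * b j ^+ 2 + \sum_i \sum_j a j ^+ 2 * b i ^+ 2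
    - 2 * \sum_i \sum_j (a i * b i) * (a j * b j).
  rewrite mulr_sumr -big_split -sumrB /=; apply: eq_bigr => i _.
  rewrite mulr_sumr -big_split -sumrB /=; apply: eq_bigr => j _; ring.
by rewrite [X in _ = _ + X - _]exchange_big -!big_distrlr /= expr2; ring.
Qed.

Lemma cauchy_schwarz (R : realDomainType) n (a b : 'I_n -> R) :
  (\sum_i a i * b i) ^+ 2 <= (\sum_i a i ^+ 2) * (\sum_i b i ^+ 2).
Proof.
rewrite -subr_ge0 -(pmulr_rge0 _ (ltr0Sn R 1)) lagrange_identity.
by apply: sumr_ge0 => i _; apply: sumr_ge0 => j _; exact: sqr_ge0.
Qed.

Lemma ler_normWD (R : realType) k (x y : 'rV[R]_k) :
  normW (x + y) <= normW x + normW y.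
Proof.
rewrite /normW; set A := \sum_i x 0 i ^+ 2; set B := \sum_i y 0 i ^+ 2.
have A0 : 0 <= A by apply: sumr_ge0 => i _; exact: sqr_ge0.
have B0 : 0 <= B by apply: sumr_ge0 => i _; exact: sqr_ge0.
have -> : \sum_i (x + y) 0 i ^+ 2 = A + B + 2 * \sum_i x 0 i * y 0 i.
  rewrite mulr_sumr -!big_split /=; apply: eq_bigr => i _; rewrite mxE; ring.
have xy_le : \sum_i x 0 i * y 0 i <= Num.sqrt A * Num.sqrt B.
  rewrite -sqrtrM //; apply: le_trans (ler_norm _) _.
  by rewrite -sqrtr_sqr; apply/ler_wsqrtr/cauchy_schwarz.
have AB0 : 0 <= Num.sqrt A + Num.sqrt B by rewrite addr_ge0 ?sqrtr_ge0.
rewrite -[X in _ <= X]ger0_norm // -sqrtr_sqr ler_sqrt ?sqr_ge0 //.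
by rewrite sqrrD !sqr_sqrtr //; lra.
Qed.

Lemma leq_card_bigcup (I T : finType) (P : pred I) (A : I -> {set T}) :
  (#|\bigcup_(i | P i) A i| <= \sum_(i | P i) #|A i|)%N.
Proof.
apply: (big_ind2 (fun (S : {set T}) n => #|S| <= n)%N) => [|S1 n1 S2 n2 h1 h2|//].
  by rewrite cards0.
by rewrite (leq_trans (leq_card_setU _ _)) ?leq_add.
Qed.

Lemma connect_last_edge (V : finType) (E : rel V) t v :
  connect E t v -> t != v -> exists2 u, connect E t u & E u v.
Proof.
move=> /connectP[p + ->]; elim/last_ind: p => [|p y _]; first by rewrite eqxx.
rewrite rcons_path last_rcons => /andP[tp py] _.
by exists (last t p) => //; apply/connectP; exists p.
Qed.

Section Descendants.

Variables (V : finType) (E : rel V).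

Definition descendants (T : {set V}) : {set V} :=
  [set v | [exists t in T, connect E t v]].

Lemma sub_descendants (T : {set V}) : T \subset descendants T.
Proof.
by apply/subsetP => t tT; rewrite inE; apply/existsP; exists t; rewrite tT connect0.
Qed.

Lemma descendants_closed (T : {set V}) u v :
  E u v -> u \in descendants T -> v \in descendants T.
Proof.
move=> uv; rewrite !inE => /existsP[t /andP[tT tu]].
by apply/existsP; exists t; rewrite tT (connect_trans tu (connect1 uv)).
Qed.

Lemma descendants_parent (T : {set V}) v : v \in descendants T -> v \notin T ->
  exists2 u, u \in descendants T & E u v.
Proof.
rewrite inE => /existsP[t /andP[tT tv]] vT.
have [|u tu uv] := connect_last_edge tv; first by apply: contraNneq vT => <-.
by exists u => //; rewrite inE; apply/existsP; exists t; rewrite tT.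
Qed.

End Descendants.

Section Ancestors.

Variables (VB : finType) (EB : rel VB).

Definition strict_ancestors (b : VB) : {set VB} := [set a | connect EB a b & a != b].

Lemma card_strict_ancestors_lt b : (#|strict_ancestors b| < #|VB|)%N.
Proof.
rewrite -cardsT; apply: proper_card; apply/properP; split; first exact: subsetT.
by exists b; rewrite !inE ?eqxx ?andbF.
Qed.

Lemma card_strict_ancestors_edge a b : is_dag EB -> EB a b ->
  (#|strict_ancestors a| < #|strict_ancestors b|)%N.
Proof.
move=> dag ab; have ba := dag a b ab.
apply: proper_card; apply/properP; split.
  apply/subsetP => x; rewrite !inE => /andP[xa _].
  rewrite (connect_trans xa (connect1 ab)); apply: contraNneq ba => xb.
  by rewrite -xb.
exists a; last by rewrite !inE eqxx andbF.
by rewrite !inE connect1 //; apply: contraNneq ba => ->; rewrite connect0.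
Qed.

End Ancestors.

Section FiberCount.

Variables (VB : finType) (EB : rel VB) (V : finType) (E : rel V) (pi : V -> VB).
Hypothesis pi_hom : is_hom E EB pi.

Lemma card_fiber_descendants (T : {set V}) b :
  (#|[set v in descendants E T | pi v == b]| <= #|[set t in T | pi t == b]| +
    \sum_(a | EB a b) max_outdeg E pi a b * #|[set v in descendants E T | pi v == a]|)%N.
Proof.
set X := descendants E T.
have sub : [set v in X | pi v == b] \subset [set t in T | pi t == b] :|:
    \bigcup_(a | EB a b) \bigcup_(u in [set v in X | pi v == a])
      [set y | E u y && (pi y == b)].
  apply/subsetP => v; rewrite inE => /andP[vX /eqP vb].
  rewrite !inE vb eqxx andbT; case: (boolP (v \in T)) => //= vT.
  have [u uX uv] := descendants_parent vX vT.
  apply/bigcupP; exists (pi u); first by rewrite -vb pi_hom.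
  by apply/bigcupP; exists u; rewrite inE ?uv ?vb ?eqxx ?andbT.
rewrite (leq_trans (subset_leq_card sub)) // (leq_trans (leq_card_setU _ _)) //.
rewrite leq_add2l (leq_trans (leq_card_bigcup _ _)) // leq_sum // => a ab.
rewrite (leq_trans (leq_card_bigcup _ _)) // mulnC -sum_nat_const leq_sum // => u.
by rewrite inE => /andP[_ ua]; apply: leq_bigmax_cond.
Qed.

Lemma fiber_descendants_bound (R : realFieldType) (T : {set V}) (eps Lambda : R) :
    is_dag EB -> 0 <= eps -> 0 <= Lambda ->
    (forall b, (#|[set t in T | pi t == b]|)%:R <= eps * (fiber_card pi b)%:R) ->
    (forall b, (0 < fiber_card pi b)%N ->
       \sum_(a | EB a b) (max_outdeg E pi a b)%:R * (fiber_card pi a)%:R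
         <= Lambda * (fiber_card pi b)%:R) ->
  forall b, (#|[set v in descendants E T | pi v == b]|)%:R
              <= eps * (1 + Lambda) ^+ #|VB| * (fiber_card pi b)%:R.
Proof.
move=> dag eps0 Lambda0 Tb sum_b.
set X := descendants E T; set n := fiber_card pi.
suff bound t b : (#|strict_ancestors EB b| < t)%N ->
    (#|[set v in X | pi v == b]|)%:R <= eps * (1 + Lambda) ^+ t * (n b)%:R.
  by move=> b; apply/bound/card_strict_ancestors_lt.
elim: t b => [//|t IH] b bt.
have [nb0|nb_gt0] := posnP (n b).
  suff -> : #|[set v in X | pi v == b]| = 0%N by rewrite nb0 mulr0.
  apply/eqP; rewrite -leqn0 -nb0; apply: subset_leq_card.
  by apply/subsetP => v; rewrite !inE => /andP[_ ->].
have Q1 : 1 <= (1 + Lambda) ^+ t by apply: exprn_ege1; lra.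
have rec := card_fiber_descendants T b.
rewrite -(ler_nat R) natrD natr_sum in rec.
have IHsum : \sum_(a | EB a b) (max_outdeg E pi a b * #|[set v in X | pi v == a]|)%:R
    <= eps * (1 + Lambda) ^+ t *
       \sum_(a | EB a b) (max_outdeg E pi a b)%:R * (n a)%:R.
  rewrite mulr_sumr ler_sum // => a ab; rewrite natrM mulrCA ler_wpM2l //.
  exact: IH (leq_trans (card_strict_ancestors_edge dag ab) bt).
have epsQ0 : 0 <= eps * (1 + Lambda) ^+ t by rewrite mulr_ge0 //; lra.
have := ler_wpM2l epsQ0 (sum_b b nb_gt0).
have := ler_wpM2r (mulr_ge0 eps0 (ler0n R (n b))) Q1.
have := Tb b; rewrite exprS.
move: rec IHsum; set Q := (1 + Lambda) ^+ t; nra.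
Qed.

End FiberCount.

Section FarEdges.

Variables (R : realType) (VB : finType) (dW : VB -> VB -> nat).
Variables (V : finType) (E : rel V) (pi : V -> VB).

Definition far_edges (w w0 : param R dW pi) (eta : R) : {set V * V} :=
  [set p | E p.1 p.2 && (eta < normW (w p.1 p.2 - w0 p.1 p.2))].

Lemma card_far_edges w w0 eta : 0 <= eta ->
  (#|far_edges w w0 eta|)%:R * eta ^+ 2 <= param_dist E w w0 ^+ 2.
Proof.
move=> eta0; rewrite /param_dist sqr_sqrtr; last first.
  by apply: sumr_ge0 => u _; apply: sumr_ge0 => v _; apply: sqr_ge0.
rewrite pair_big_dep mulr_natl -sumr_const big_mkcond [X in _ <= X]big_mkcond.
apply: ler_sum => -[u v] _; rewrite inE /=.
case: (E u v) => //=; case: ifP => [/ltW far|_]; last exact: sqr_ge0.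
by rewrite lerXn2r // nnegrE // (le_trans eta0).
Qed.

Lemma card_far_heads_fiber (EB : rel VB) w w0 eta b : is_hom E EB pi ->
  (#|[set t in [set p.2 | p in far_edges w w0 eta] | pi t == b]|
    <= (b \notin parentless EB) * #|far_edges w w0 eta|)%N.
Proof.
move=> pi_hom; have [bI|_] := boolP (b \in parentless EB); last first.
  rewrite mul1n; apply: leq_trans (leq_imset_card (fun p : V * V => p.2) _).
  by apply/subset_leq_card/subsetP => t; rewrite inE => /andP[].
rewrite leqn0 cards_eq0; apply/eqP/setP => t; rewrite !inE; apply/negP.
case/andP => /imsetP[[u v] + ->] /eqP vb; rewrite inE /= => /andP[uv _].
by move: bI; rewrite inE -vb => /forallP/(_ (pi u)); rewrite pi_hom.
Qed.

End FarEdges.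

Section Restriction.

Variables (R : realType) (VB : finType) (EB : rel VB) (C : finType) (dW : VB -> VB -> nat).
Variables (V : finType) (E : rel V) (pi : V -> VB) (c : V -> option C).
Variables (H : finType) (F : rel H) (piH : H -> VB) (cH : H -> option C).
Variable wH : param R dW piH.

Lemma in_M_setD_closed (w0 w : param R dW pi) (alpha alpha' : H -> R) (eta eta' : R)
    (VS : {set V}) (ES : rel V) (phi : V -> H) (X : {set V}) :
    in_M EB E c w0 F cH wH alpha eta VS ES phi ->
    (forall u v, E u v -> u \in X -> v \in X) ->
    (forall u v, E u v -> eta' < normW (w u v - w0 u v) -> v \in X) ->
    (forall x, (#|[set v in X | pi v == piH x]|)%:R
                 <= (alpha x - alpha' x) * (fiber_card pi (piH x))%:R) ->
  in_M EB E c w F cH wH alpha' (eta + eta') (VS :\: X)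
    (fun u v => [&& ES u v, u \in VS :\: X & v \in VS :\: X]) phi.
Proof.
move=> [[ES_sub S_fib] [phi_hom phi_fib] [phi_pi phi_c] phi_w phi_card].
move=> X_closed X_far X_small; set VS' := VS :\: X.
have VS'VS v : v \in VS' -> v \in VS by rewrite inE => /andP[].
have parent u v : v \in VS' -> E u v -> ES u v /\ u \in VS'.
  rewrite inE => /andP[vX vS] uv.
  have [_ /(_ u uv)[u' uvS /= eu]] := S_fib v vS; subst u'.
  have /and3P[_ uS _] := ES_sub _ _ uvS.
  by split => //; rewrite inE uS andbT; apply: contraNN vX; apply: X_closed.
split.
- split; first by move=> u v /and3P[/ES_sub/and3P[-> _ _] -> ->].
  move=> v vS'; split; first by move=> ? ? _ _.
  by move=> u /(parent u v vS')[uvS uS']; exists u; rewrite //= uvS uS' vS'.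
- split; first by move=> u v /and3P[/phi_hom].
  move=> v vS'; have [phi_inj phi_onto] := phi_fib v (VS'VS v vS'); split.
    by move=> u1 u2; rewrite !inE => /and3P[u1v _ _] /and3P[u2v _ _]; apply: phi_inj.
  move=> y /phi_onto[u uvS <-]; exists u => //.
  have /and3P[uv _ _] := ES_sub _ _ uvS.
  by have [_ uS'] := parent u v vS' uv; rewrite uvS uS' vS'.
- by split => v /VS'VS; [apply: phi_pi | apply: phi_c].
- move=> u v /and3P[uvS _ vS'] h.
  have /and3P[uv _ _] := ES_sub _ _ uvS.
  have near : normW (w u v - w0 u v) <= eta'.
    rewrite leNgt; apply/negP => /(X_far u v uv) vX.
    by move: vS'; rewrite inE vX.
  have := ler_normWD (w u v - w0 u v) (w0 u v - castmx (erefl 1%N, h) (wH (phi u) (phi v))).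
  by rewrite addrA subrK; have := phi_w u v uvS h; lra.
- move=> x; have := phi_card x; have := X_small x.
  have card_split : (#|[set v in VS | phi v == x]|
      <= #|[set v in VS' | phi v == x]| + #|[set v in X | pi v == piH x]|)%N.
    rewrite (leq_trans _ (leq_card_setU _ _)) // subset_leq_card //.
    apply/subsetP => v; rewrite !inE => /andP[vS /eqP <-].
    by rewrite phi_pi // vS !eqxx !andbT; case: (v \in X).
  move: card_split; rewrite -(ler_nat R) natrD mulrBl; lra.
Qed.

End Restriction.

Theorem lemma2 (R : realType)
  (* the base DAG B, the spaces W_e (by their dimensions), C and p_C *)
  (VB : finType) (EB : rel VB) (hdag : is_dag EB)
  (dW : VB -> VB -> nat)
  (C : finType) (pC : C -> VB) (hpC : forall x, pC x \in parentless EB)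
  (* parameters *)
  (eta Rr : R) (heta : 0 < eta) (hRr : 0 <= Rr)
  (* the target lift G^star = (G^star, pi^star, c^star) and w^star *)
  (Vs : finType) (Es : rel Vs) (pis : Vs -> VB) (cs : Vs -> option C)
  (hGs : @is_lift VB EB C pC Vs Es pis cs) (ws : param R dW pis)
  (alpha : Vs -> R) (halpha : forall v, 0 < alpha v <= 1)
  (* G = (G, pi, c) and w0 *)
  (V : finType) (E : rel V) (pi : V -> VB) (c : V -> option C)
  (hG : @is_lift VB EB C pC V E pi c) (w0 : param R dW pi)
  (hlog : forall a b, EB a b ->
     (fiber_card pi a)%:R * ln ((fiber_card pi a)%:R : R) <= (fiber_card pi b)%:R)
  (Lambda : R) (hLambda : 0 <= Lambda)
  (hsum : forall b : VB,
     \sum_(a | EB a b) (max_outdeg E pi a b)%:R * (fiber_card pi a)%:R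
                         / (fiber_card pi b)%:R <= Lambda)
  (hinf : forall b : VB, b \notin parentless EB -> forall v : Vs,
     2 * Rr ^+ 2 / eta ^+ 2 * (1 + Lambda) ^+ #|VB| / alpha v
       <= (fiber_card pi b)%:R) :
  forall w : param R dW pi, @param_dist R VB dW V E pi w w0 <= Rr ->
    @M_nonempty R VB EB C dW V E pi c w0 Vs Es pis cs ws alpha eta ->
    @M_nonempty R VB EB C dW V E pi c w Vs Es pis cs ws
      (fun v => alpha v / 2) (2 * eta).
Proof.
move=> w w_near [VS [ES [phi M0]]]; have [pi_hom _ _ _] := hG.
set Far := far_edges E w w0 eta; set X := descendants E [set p.2 | p in Far].
have card_Far : (#|Far|)%:R <= Rr ^+ 2 / eta ^+ 2.
  rewrite ler_pdivlMr ?exprn_gt0 // (le_trans (card_far_edges E w w0 (ltW heta))) //.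
  by rewrite lerXn2r // nnegrE sqrtr_ge0.
exists (VS :\: X), (fun u v => [&& ES u v, u \in VS :\: X & v \in VS :\: X]), phi.
rewrite mulr_natl mulr2n; apply: (in_M_setD_closed M0).
- by move=> u v; apply: descendants_closed.
- move=> u v uv far; apply/(subsetP (sub_descendants _ _))/imsetP.
  by exists (u, v); rewrite // inE uv far.
move=> x /=; have /andP[alpha_gt0 _] := halpha x.
set P := (1 + Lambda) ^+ #|VB|; set eps := alpha x / (2 * P).
have P_gt0 : 0 < P by rewrite exprn_gt0 //; lra.
have eps_ge0 : 0 <= eps by rewrite divr_ge0 ?mulr_ge0 //; lra.
have -> : alpha x - alpha x / 2 = eps * P by rewrite /eps; field; rewrite gt_eqF.
apply: (fiber_descendants_bound pi_hom) => // [b|b nb_gt0]; last first.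
  by rewrite -ler_pdivrMr ?ltr0n // mulr_suml; apply: hsum.
apply: le_trans (_ : (((b \notin parentless EB) * #|Far|)%N)%:R <= _).
  by rewrite ler_nat card_far_heads_fiber.
have [_|bI] := boolP (b \in parentless EB); first by rewrite mulr_ge0.
rewrite mul1n (le_trans card_Far) // (le_trans _ (ler_wpM2l eps_ge0 (hinf b bI x))) //.
rewrite [X in _ <= X](_ : _ = Rr ^+ 2 / eta ^+ 2) //.
by rewrite /eps /P; field; rewrite !gt_eqF // exprn_gt0.
Qed.
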